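(* Let $X$ be a real or complex $m\times n$ matrix and $\tilde X=J_m^*XJ_n$ (an $(m+1)\times(n+1)$ matrix all of whose row and column sums are zero). Let $k_m,k_n$ be invertible square matrices with $K_m=k_mk_m^*$ and $K_n=k_nk_n^*$. Then \[\tilde X^+=J_n^*(k_n^{-1})^*(k_m^*Xk_n)^+k_m^{-1}J_m.\]
   Context: $A^*$ denotes conjugate transpose and $A^+$ the Moore–Penrose inverse (the unique $B$ with $ABA=A$, $BAB=B$, $(AB)^*=AB$, $(BA)^*=BA$). For each $p\ge1$, $\mathbf 1$ is the all-ones column vector, $J_p:=[I_p\mid -\mathbf 1]$ is the $p\times(p+1)$ matrix obtained by appending a column of $-1$'s to $I_p$, and $K_p:=J_pJ_p^*=I_p+\mathbf 1\mathbf 1^*$ (symmetric positive definite). *)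

(* Scalars: any numClosedFieldType C (e.g. algC), with
   conjugation Num.conj; this covers the complex case, and real matrices are
   matrices over C with real entries. *)
From HB Require Import structures.
From mathcomp Require Import all_boot all_order all_algebra.
From Stdlib Require Import ClassicalEpsilon.
Set Implicit Arguments. Unset Strict Implicit. Unset Printing Implicit Defensive.
Import Order.TTheory GRing.Theory Num.Theory.
Local Open Scope ring_scope.

Definition ctmx (C : numClosedFieldType) (m n : nat) (A : 'M[C]_(m, n)) : 'M[C]_(n, m) :=
  (map_mx Num.conj A)^T.

Definition is_MP (C : numClosedFieldType) (m n : nat)
  (A : 'M[C]_(m, n)) (B : 'M[C]_(n, m)) : Prop :=
  [/\ A *m B *m A = A, B *m A *m B = B,
      ctmx (A *m B) = A *m B & ctmx (B *m A) = B *m A].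

(* the Moore--Penrose inverse A^+ (the unique B with is_MP A B; it exists) *)
Definition mpinv (C : numClosedFieldType) (m n : nat) (A : 'M[C]_(m, n)) : 'M[C]_(n, m) :=
  epsilon (inhabits 0) (fun B => is_MP A B).

Definition Jmx (C : numClosedFieldType) (p : nat) : 'M[C]_(p, p.+1) :=
  \matrix_(i < p, j < p.+1) (if (j : nat) == p then -1 else ((i : nat) == j)%:R).

Definition Kmx (C : numClosedFieldType) (p : nat) : 'M[C]_p := Jmx C p *m ctmx (Jmx C p).

(* Put U_p = k_p^-1 J_p.  Then U_p U_p^* = k_p^-1 K_p (k_p^-1)^* = 1,
   i.e. U_p is a co-isometry, and X~ = U_m^* (k_m^* X k_n) U_n.  The four
   Penrose equations are preserved under M |-> U^* M V for co-isometries U, V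
   (with the candidate inverse P |-> V^* P U), so by uniqueness of the
   Moore--Penrose inverse X~^+ = U_n^* (k_m^* X k_n)^+ U_m, which is the claim. *)
From mathcomp Require Import all_boot all_order all_algebra.
From Stdlib Require Import ClassicalEpsilon.
Import Order.TTheory GRing.Theory Num.Theory.
Local Open Scope ring_scope.
Set Implicit Arguments. Unset Strict Implicit.

Section MoorePenrose.
Variable C : numClosedFieldType.

Lemma ctmx_mul m n p (A : 'M[C]_(m, n)) (B : 'M[C]_(n, p)) :
  ctmx (A *m B) = ctmx B *m ctmx A.
Proof. by rewrite /ctmx map_mxM trmx_mul. Qed.

Lemma ctmxK m n (A : 'M[C]_(m, n)) : ctmx (ctmx A) = A.
Proof. by apply/matrixP => i j; rewrite !mxE conjCK. Qed.

Lemma ctmx1 n : ctmx (1%:M : 'M[C]_n) = 1%:M.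
Proof. by apply/matrixP => i j; rewrite !mxE rmorph_nat eq_sym. Qed.

Lemma ctmx_invmxK n (k : 'M[C]_n) : k \in unitmx ->
  ctmx k *m ctmx (invmx k) = 1%:M.
Proof. by move=> uk; rewrite -ctmx_mul mulVmx // ctmx1. Qed.

(* Positive definiteness of the Hermitian form: A A^* = 0 forces A = 0,
   since the i-th diagonal entry of A A^* is the squared norm of row i. *)
Lemma mulmx_ctmx_eq0 m n (A : 'M[C]_(m, n)) : A *m ctmx A = 0 -> A = 0.
Proof.
move=> /matrixP AA0; apply/matrixP => i j; rewrite mxE.
have row_norm0 : \sum_(t < n) `|A i t| ^+ 2 = 0.
  transitivity ((A *m ctmx A) i i); last by rewrite AA0 mxE.
  by rewrite mxE; apply: eq_bigr => t _; rewrite normCK !mxE.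
have /eqP : `|A i j| ^+ 2 = 0.
  by apply: (psumr_eq0P _ row_norm0) => // t _; rewrite exprn_ge0.
by rewrite sqrf_eq0 normr_eq0 => /eqP.
Qed.

Lemma gram_unit r k (H : 'M[C]_(r, k)) : row_free H -> H *m ctmx H \in unitmx.
Proof.
move=> fH; rewrite -row_free_unit; apply: inj_row_free => v vHH0.
apply: (row_free_inj fH); rewrite mul0mx; apply: mulmx_ctmx_eq0.
by rewrite ctmx_mul !mulmxA -(mulmxA v) vHH0 !mul0mx.
Qed.

Lemma herm_invmx n (M : 'M[C]_n) : ctmx M = M -> M \in unitmx ->
  ctmx (invmx M) = invmx M.
Proof.
move=> hM uM; have inv_l : ctmx (invmx M) *m M = 1%:M.
  by rewrite -{2}hM -ctmx_mul mulmxV // ctmx1.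
by rewrite -[LHS]mulmx1 -(mulmxV uM) mulmxA inv_l mul1mx.
Qed.

Lemma is_MP_uniq m n (A : 'M[C]_(m, n)) B B' : is_MP A B -> is_MP A B' -> B = B'.
Proof.
case=> ABA BAB hAB hBA [AB'A B'AB' hAB' hB'A].
have AB_eq : A *m B = A *m B'.
  rewrite -hAB -{1}AB'A -(mulmxA (A *m B')) ctmx_mul hAB hAB'.
  by rewrite mulmxA ABA.
have BA_eq : B *m A = B' *m A.
  rewrite -hBA -{1}AB'A -(mulmxA A B' A) mulmxA ctmx_mul hBA hB'A.
  by rewrite -!mulmxA (mulmxA A B A) ABA.
by rewrite -BAB -mulmxA AB_eq mulmxA BA_eq B'AB'.
Qed.

Lemma is_MP_full_rank_factor m n r (F : 'M[C]_(m, r)) (G : 'M[C]_(r, n)) :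
  row_free (ctmx F) -> row_free G ->
  is_MP (F *m G)
    (ctmx G *m invmx (G *m ctmx G) *m invmx (ctmx F *m F) *m ctmx F).
Proof.
move=> fF fG.
have uP : ctmx F *m F \in unitmx by rewrite -{2}(ctmxK F) gram_unit.
have uQ : G *m ctmx G \in unitmx by exact: gram_unit.
have hP : ctmx (invmx (ctmx F *m F)) = invmx (ctmx F *m F).
  by rewrite herm_invmx // ctmx_mul ctmxK.
have hQ : ctmx (invmx (G *m ctmx G)) = invmx (G *m ctmx G).
  by rewrite herm_invmx // ctmx_mul ctmxK.
set P := ctmx F *m F in uP hP *; set Q := G *m ctmx G in uQ hQ *.
have AB : F *m G *m (ctmx G *m invmx Q *m invmx P *m ctmx F)
    = F *m invmx P *m ctmx F.
  by rewrite -!mulmxA (mulmxA G) (mulmxA Q) mulmxV // mul1mx.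
have BA : ctmx G *m invmx Q *m invmx P *m ctmx F *m (F *m G)
    = ctmx G *m invmx Q *m G.
  by rewrite -!mulmxA (mulmxA (ctmx F)) (mulmxA (invmx P)) mulVmx // mul1mx.
split.
- by rewrite AB -!mulmxA (mulmxA (ctmx F)) (mulmxA (invmx P)) mulVmx // mul1mx.
- by rewrite BA -!mulmxA (mulmxA G) (mulmxA Q) mulmxV // mul1mx.
- by rewrite AB !ctmx_mul ctmxK hP mulmxA.
- by rewrite BA !ctmx_mul ctmxK hQ mulmxA.
Qed.

(* Every matrix has a Moore--Penrose inverse (via A = col_base A * row_base A),
   hence [mpinv A] satisfies the Penrose equations. *)
Lemma is_MP_exists m n (A : 'M[C]_(m, n)) : exists B, is_MP A B.
Proof.
have fF : row_free (ctmx (col_base A)).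
  by rewrite /row_free /ctmx mxrank_tr mxrank_map; exact: col_base_full.
by rewrite -[A in exists B, is_MP A B]mulmx_base; eexists; exact: is_MP_full_rank_factor (row_base_free A).
Qed.

Lemma mpinv_spec m n (A : 'M[C]_(m, n)) : is_MP A (mpinv A).
Proof. exact: epsilon_spec (is_MP_exists A). Qed.

Lemma is_MP_coisometry m n p q (M : 'M[C]_(m, n)) P
    (U : 'M[C]_(m, p)) (V : 'M[C]_(n, q)) :
  U *m ctmx U = 1%:M -> V *m ctmx V = 1%:M -> is_MP M P ->
  is_MP (ctmx U *m M *m V) (ctmx V *m P *m U).
Proof.
move=> hU hV [MPM PMP hMP hPM].
have AB : ctmx U *m M *m V *m (ctmx V *m P *m U) = ctmx U *m (M *m P) *m U.
  by rewrite -!mulmxA (mulmxA V) hV mul1mx.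
have BA : ctmx V *m P *m U *m (ctmx U *m M *m V) = ctmx V *m (P *m M) *m V.
  by rewrite -!mulmxA (mulmxA U) hU mul1mx.
split.
- rewrite AB -!mulmxA (mulmxA U) hU mul1mx.
  by rewrite (mulmxA P) (mulmxA M) (mulmxA M P) MPM !mulmxA.
- rewrite BA -!mulmxA (mulmxA V) hV mul1mx.
  by rewrite (mulmxA M) (mulmxA P) (mulmxA P M) PMP !mulmxA.
- by rewrite AB ctmx_mul ctmx_mul ctmxK hMP !mulmxA.
- by rewrite BA ctmx_mul ctmx_mul ctmxK hPM !mulmxA.
Qed.

Lemma mpinv_coisometry m n p q (M : 'M[C]_(m, n))
    (U : 'M[C]_(m, p)) (V : 'M[C]_(n, q)) :
  U *m ctmx U = 1%:M -> V *m ctmx V = 1%:M ->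
  mpinv (ctmx U *m M *m V) = ctmx V *m mpinv M *m U.
Proof.
move=> hU hV; apply: is_MP_uniq (mpinv_spec _) _.
exact: is_MP_coisometry (mpinv_spec M).
Qed.

Lemma invmx_J_coisometry p (k : 'M[C]_p) :
  k \in unitmx -> Kmx C p = k *m ctmx k ->
  (invmx k *m Jmx C p) *m ctmx (invmx k *m Jmx C p) = 1%:M.
Proof.
move=> uk hK; rewrite ctmx_mul !mulmxA -(mulmxA (invmx k)) -/(Kmx C p) hK.
by rewrite !mulmxA mulVmx // mul1mx ctmx_invmxK.
Qed.

End MoorePenrose.

Theorem theorem7 (C : numClosedFieldType) (m n : nat) (hm : (0 < m)%N) (hn : (0 < n)%N)
  (X : 'M[C]_(m, n)) (km : 'M[C]_m) (kn : 'M[C]_n)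
  (hkm : km \in unitmx) (hkn : kn \in unitmx)
  (hKm : Kmx C m = km *m ctmx km) (hKn : Kmx C n = kn *m ctmx kn) :
  mpinv (ctmx (Jmx C m) *m X *m Jmx C n)
  = ctmx (Jmx C n) *m ctmx (invmx kn) *m mpinv (ctmx km *m X *m kn)
      *m invmx km *m Jmx C m.
Proof.
have centred_factor : ctmx (Jmx C m) *m X *m Jmx C n
    = ctmx (invmx km *m Jmx C m) *m (ctmx km *m X *m kn) *m (invmx kn *m Jmx C n).
  rewrite ctmx_mul !mulmxA -(mulmxA _ (ctmx (invmx km))).
  by rewrite -ctmx_mul mulmxV // ctmx1 mulmx1 -(mulmxA _ kn) mulmxV // mulmx1.
rewrite centred_factor mpinv_coisometry ?invmx_J_coisometry //.
by rewrite ctmx_mul !mulmxA.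
Qed.
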